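(* Let $H$ be a finite $p$-group with center $Z(H)$ and let $A$ be a maximal abelian subgroup of $H$. Then $m_{\mathsf{faithful}}(H)\le m_{\mathsf{faithful}}(Z(H))\,[H:A]$.
   Context: For a finite group $G$, $m_{\mathsf{faithful}}(G)$ denotes the smallest dimension of a faithful complex representation of $G$. *)

From HB Require Import structures.
From mathcomp Require Import all_boot all_order all_algebra all_fingroup all_solvable all_field all_character.
From Stdlib Require Import ClassicalDescription.
Set Implicit Arguments. Unset Strict Implicit. Unset Printing Implicit Defensive.

Definition has_faithful_rep (gT : finGroupType) (G : {group gT}) (n : nat) : Prop :=
  exists rG : mx_representation algC G n, mx_faithful rG.

Definition decP (P : Prop) : bool :=
  if excluded_middle_informative P then true else false.

Lemma decPP (P : Prop) : reflect P (decP P).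
Proof. by rewrite /decP; case: excluded_middle_informative => h; constructor. Qed.

Lemma has_faithful_rep_ex_dec (gT : finGroupType) (G : {group gT}) :
  (exists n, has_faithful_rep G n) -> exists n, decP (has_faithful_rep G n).
Proof. by case=> n h; exists n; apply/decPP. Qed.

(* m_faithful G : smallest dimension of a faithful complex representation of G
   (such a representation always exists, e.g. the regular one; the default
   value 0 in the impossible other branch is irrelevant). *)
Definition m_faithful (gT : finGroupType) (G : {group gT}) : nat :=
  match excluded_middle_informative (exists n, has_faithful_rep G n) with
  | left h => ex_minn (has_faithful_rep_ex_dec h)
  | right _ => 0
  end.

From HB Require Import structures.
From mathcomp Require Import all_boot all_order all_algebra all_fingroup all_solvable all_field all_character.
From Stdlib Require Import ClassicalDescription.

Set Implicit Arguments.
Unset Strict Implicit.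
Unset Printing Implicit Defensive.

Import GRing.Theory Num.Theory.

(* Let Z := Z(H) and A a maximal abelian subgroup of H; maximality forces
   Z <= A.  A faithful representation of Z of degree m has a character that
   extends (constituent by constituent, all of them linear as A is abelian)
   to a character psi of A of degree m.  The induced character Ind_A^H psi
   has degree m [H:A], and its kernel meets Z inside the kernel of
   Res_Z psi, which is trivial; in the nilpotent group H a normal subgroup
   meeting the center trivially is itself trivial, so Ind_A^H psi is
   faithful. *)

Section MinimalFaithfulDegree.

Variables (gT : finGroupType) (G : {group gT}).

Lemma has_faithful_rep_regular : has_faithful_rep G #|G|.
Proof. by exists (regular_repr algC G); apply: regular_mx_faithful. Qed.

Lemma m_faithful_rep : has_faithful_rep G (m_faithful G).
Proof.
rewrite /m_faithful; case: excluded_middle_informative => [ex|[]].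
  by case: ex_minnP => m /decPP.
by exists #|G|; apply: has_faithful_rep_regular.
Qed.

Lemma m_faithful_min n : has_faithful_rep G n -> m_faithful G <= n.
Proof.
rewrite /m_faithful => fGn; case: excluded_middle_informative => [ex|[]].
  by case: ex_minnP => m _; apply; apply/decPP.
by exists n.
Qed.

Lemma m_faithful_char_le (chi : 'CF(G)) n :
  chi \is a character -> cfker chi = 1%g -> chi 1%g = n%:R%R ->
  m_faithful G <= n.
Proof.
move=> /char_reprP[[d rG] ->] ker1; rewrite cfRepr1 => /eqP; rewrite eqr_nat.
move=> /eqP <-; apply: m_faithful_min; exists rG.
by rewrite /mx_faithful -cfker_repr ker1.
Qed.

End MinimalFaithfulDegree.

Section MaxAbelian.

Local Open Scope group_scope.

Lemma center_sub_max_abelian (gT : finGroupType) (H A : {group gT}) :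
  [max A | (A \subset H) && abelian A] -> 'Z(H) \subset A.
Proof.
case/maxgroupP=> /andP[sAH abA] maxA.
have sAZH : A <*> 'Z(H) \subset H by rewrite join_subG sAH center_sub.
have abAZ : abelian (A <*> 'Z(H)).
  by rewrite abelianY abA center_abelian (subset_trans (subsetIr _ _)) ?centS.
by rewrite -(maxA (A <*> 'Z(H))%G) ?sAZH ?abAZ ?joing_subl ?joing_subr.
Qed.

End MaxAbelian.

Section AbelianExtension.

Variables (gT : finGroupType) (Z A : {group gT}).
Hypotheses (sZA : Z \subset A) (abA : abelian A).

Local Open Scope ring_scope.

Lemma abelian_irr_ext (i : Iirr Z) : exists j : Iirr A, 'Res[Z] 'chi_j = 'chi_i.
Proof.
have /neq0_has_constt[j]: 'Ind[A] 'chi_i != 0 by rewrite cfInd_eq0 ?irr_char ?irr_neq0.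
rewrite constt_Ind_Res => iRj; exists j.
have /lin_char_irr/irrP[k Rj]: 'Res[Z] 'chi_j \is a linear_char.
  by apply: cfRes_lin_char; apply/char_abelianP.
by move: iRj; rewrite Rj constt_irr inE => /eqP->.
Qed.

Lemma abelian_char_ext (chi : 'CF(Z)) : chi \is a character ->
  exists2 psi : 'CF(A), psi \is a character & 'Res[Z] psi = chi.
Proof.
case/char_sum_irrP=> n ->; have [f Rf] := fin_all_exists abelian_irr_ext.
exists (\sum_i (n i)%:R *: 'chi_(f i)).
  by apply: rpred_sum => i _; rewrite scaler_nat rpredMn ?irr_char.
by rewrite linear_sum; apply: eq_bigr => i _; rewrite linearZ /= Rf.
Qed.

End AbelianExtension.

Section InducedFromCenter.

Local Open Scope group_scope.

Variables (gT : finGroupType) (H A : {group gT}) (psi : 'CF(A)).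
Hypotheses (sZA : 'Z(H) \subset A) (sAH : A \subset H).
Hypothesis psi_char : psi \is a character.

Local Open Scope ring_scope.

Lemma cfker_Ind_center :
  cfker ('Ind[H] psi) :&: 'Z(H) \subset cfker ('Res['Z(H)] psi).
Proof.
have [-> | nz_psi] := eqVneq psi 0.
  by rewrite !linear0 !cfker_cfun0 subsetIr.
rewrite cfker_Ind // cfker_Res // setIC setIS //.
exact: gcore_sub.
Qed.

Lemma cfker_Ind_nil_center : nilpotent H ->
  cfker ('Res['Z(H)] psi) = 1%g -> cfker ('Ind[H] psi) = 1%g.
Proof.
move=> nilH kerR1; apply: TI_center_nil (cfker_normal _) _ => //.
by apply/trivgP; rewrite -kerR1 cfker_Ind_center.
Qed.

End InducedFromCenter.

Theorem corollary3p6 (gT : finGroupType) (p : nat) (H A : {group gT}) :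
  prime p -> (p.-group H)%g ->
  ([max A | (A \subset H) && abelian A])%g ->
  m_faithful H <= m_faithful ('Z(H))%G * #|H : A|%g.
Proof.
move=> _ pH maxA; have sZA := center_sub_max_abelian maxA.
have /maxgroupp/andP[sAH abA] := maxA.
have [rZ faithfulZ] := m_faithful_rep 'Z(H).
have [psi psi_char Rpsi] := abelian_char_ext sZA abA (cfRepr_char rZ).
apply: (@m_faithful_char_le _ _ ('Ind[H] psi)%R).
- exact: cfInd_char.
- apply: cfker_Ind_nil_center => //; first exact: pgroup_nil pH.
  by rewrite Rpsi cfker_repr; apply/trivgP.
- by rewrite cfInd1 // -(cfRes1 'Z(H)%g) Rpsi cfRepr1 -natrM mulnC.
Qed.
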